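(* Let $A$ be a non-empty set and $\theta\subseteq\mathbb{M}_A^2$ a congruence on the free magma $\mathbb{M}_A$. The following are equivalent: (1) $\mathbb{M}_A/\theta$ is equidecomposable; (2) $\theta$ is closed; (3) $\mathcal{G}(\theta)\subseteq (A\times\mathbb{M}_A)\cup(\mathbb{M}_A\times A)$.
   Context: $\mathbb{M}_A$ is the free magma on $A$ (non-associative words over $A$ with $x+y=(x,y)$). $\mathbb{M}_A^2$ has the componentwise operation. A congruence on a magma $M$ is an equivalence relation on $M$ that is a submagma of $M^2$. A magma is equidecomposable if $x+y=x'+y'$ implies $x=x'$ and $y=y'$. A subset $X$ of a magma is closed if $u+v\in X$ implies $u,v\in X$; here $\theta$ is closed as a subset of $\mathbb{M}_A^2$. For a submagma $S$ of $\mathbb{M}_A^2$, $\mathcal{G}(S)$ is the set of elements of $S$ that cannot be written as $u+v$ with $u,v\in S$ (its unique minimal generating set). *)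

(** The free magma M_A on A: non-associative words (binary trees with leaves in A);
    the operation is x + y = (x, y) = Node x y. *)
Inductive fmagma (A : Type) : Type :=
| Leaf : A -> fmagma A
| Node : fmagma A -> fmagma A -> fmagma A.
Arguments Leaf {A} _.
Arguments Node {A} _ _.

Definition pair_op {A : Type} (u v : fmagma A * fmagma A) : fmagma A * fmagma A :=
  (Node (fst u) (fst v), Node (snd u) (snd v)).

Definition rel2 (A : Type) := fmagma A * fmagma A -> Prop.

Definition submagma2 {A : Type} (S : rel2 A) : Prop :=
  forall u v, S u -> S v -> S (pair_op u v).

Definition congruence {A : Type} (theta : rel2 A) : Prop :=
  (forall x, theta (x, x)) /\
  (forall x y, theta (x, y) -> theta (y, x)) /\
  (forall x y z, theta (x, y) -> theta (y, z) -> theta (x, z)) /\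
  submagma2 theta.

(** Equidecomposability of the quotient magma M_A/theta, written out on
    representatives: the class operation is [x]+[y] = [x+y] and equality of
    classes is theta, so "[x]+[y] = [x']+[y'] implies [x]=[x'] and [y]=[y']"
    unfolds to the following. *)
Definition quotient_equidecomposable {A : Type} (theta : rel2 A) : Prop :=
  forall x y x' y', theta (Node x y, Node x' y') -> theta (x, x') /\ theta (y, y').

Definition closed2 {A : Type} (X : rel2 A) : Prop :=
  forall u v, X (pair_op u v) -> X u /\ X v.

Definition gens {A : Type} (S : rel2 A) : rel2 A :=
  fun p => S p /\ ~ (exists u v, S u /\ S v /\ p = pair_op u v).

Definition is_leaf {A : Type} (x : fmagma A) : Prop := exists a, x = Leaf a.

Definition leaf_pairs {A : Type} : rel2 A :=
  fun p => is_leaf (fst p) \/ is_leaf (snd p).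

(* The operation of M_A^2 is injective, so an element u + v of a subset X can
   be written as a sum in only one way.  Hence u + v fails to be a generator of
   X exactly when both summands lie in X, and closedness says precisely that no
   sum is a generator; the sums are the pairs with no leaf component.
   Equidecomposability of M_A/theta is closedness of theta read on
   representatives. *)

From Stdlib Require Import Classical.

Lemma pair_op_inj {A : Type} (u v u' v' : fmagma A * fmagma A) :
  pair_op u v = pair_op u' v' -> u = u' /\ v = v'.
Proof.
  destruct u, v, u', v'; unfold pair_op; simpl.
  intros H; injection H; intros; subst; auto.
Qed.

Lemma not_leaf_pairs_pair_op {A : Type} (u v : fmagma A * fmagma A) :
  ~ leaf_pairs (pair_op u v).
Proof.
  intros [[a Ha] | [a Ha]]; discriminate.
Qed.

Lemma leaf_pairs_or_pair_op {A : Type} (p : fmagma A * fmagma A) :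
  leaf_pairs p \/ exists u v, p = pair_op u v.
Proof.
  destruct p as [[a | x1 x2] [b | y1 y2]];
    try (left; left; exists a; reflexivity);
    try (left; right; exists b; reflexivity).
  right; exists (x1, y1), (x2, y2); reflexivity.
Qed.

Lemma gens_pair_op {A : Type} (X : rel2 A) (u v : fmagma A * fmagma A) :
  X (pair_op u v) -> gens X (pair_op u v) <-> ~ (X u /\ X v).
Proof.
  intros Huv; split.
  - intros [_ Hnot] [Hu Hv]; apply Hnot; exists u, v; auto.
  - intros Hnot; split; [exact Huv |].
    intros (u' & v' & Hu' & Hv' & Heq).
    destruct (pair_op_inj _ _ _ _ Heq) as [<- <-]; auto.
Qed.

Lemma quotient_equidecomposable_iff_closed2 {A : Type} (theta : rel2 A) :
  quotient_equidecomposable theta <-> closed2 theta.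
Proof.
  split.
  - intros H [x x'] [y y']; exact (H x y x' y').
  - intros H x y x' y'; exact (H (x, x') (y, y')).
Qed.

Lemma closed2_iff_gens_leaf_pairs {A : Type} (X : rel2 A) :
  closed2 X <-> (forall p, gens X p -> leaf_pairs p).
Proof.
  split.
  - intros Hclosed p Hgen.
    destruct (leaf_pairs_or_pair_op p) as [Hleaf | (u & v & ->)]; [exact Hleaf | exfalso].
    pose proof (proj1 Hgen) as Huv.
    apply (gens_pair_op X u v Huv) in Hgen.
    exact (Hgen (Hclosed u v Huv)).
  - intros Hgens u v Huv.
    apply NNPP; intros Hnot.
    apply (not_leaf_pairs_pair_op u v), Hgens, gens_pair_op; assumption.
Qed.

(* Neither equivalence uses that theta is a congruence, nor that A is nonempty. *)
Theorem theorem6p4 (A : Type) (a0 : A) (theta : rel2 A) :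
  congruence theta ->
  (quotient_equidecomposable theta <-> closed2 theta) /\
  (closed2 theta <-> (forall p, gens theta p -> leaf_pairs p)).
Proof.
  intros _; split.
  - apply quotient_equidecomposable_iff_closed2.
  - apply closed2_iff_gens_leaf_pairs.
Qed.
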